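(* Let $m,n$ be positive integers and let $(A,\boldsymbol{\gamma})\in\left([0,1)^{m\times n}\times[0,1)^m\right)\setminus\mathbf{Bad}(m,n)$. Then, in the metric space $(\mathcal{C},d)$: (i) $\mathcal{C}(A,\boldsymbol{\gamma})$ is a $G_\delta$ set and is dense in $\mathcal{C}$; (ii) $\mathcal{C}(A,\boldsymbol{\gamma})$ is not an $F_\sigma$ set in $\mathcal{C}$.
   Context: $[0,1)^{m\times n}$ is the set of real $m\times n$ matrices with entries in $[0,1)$. For $\boldsymbol{x}\in\mathbb{R}^n$, $\|\boldsymbol{x}\|=\max_i|x_i|$; for $\boldsymbol{y}\in\mathbb{R}^m$, $\langle\boldsymbol{y}\rangle=\min_{\boldsymbol{p}\in\mathbb{Z}^m}\|\boldsymbol{y}-\boldsymbol{p}\|$. ''Decreasing'' means non-increasing. $\mathcal{C}$ is the set of decreasing $\psi:\mathbb{N}\to[0,\infty)$ with $\sum_{q\ge1}q^{n-1}\psi(q)^m<\infty$, equipped with the metric $d(\psi_1,\psi_2)=\sum_{q\ge1}q^{n-1}|\psi_1(q)^m-\psi_2(q)^m|$. $\mathcal{C}(A,\boldsymbol{\gamma})=\{\psi\in\mathcal{C}:\langle A\boldsymbol{q}-\boldsymbol{\gamma}\rangle<\psi(\|\boldsymbol{q}\|)\text{ for infinitely many }\boldsymbol{q}\in\mathbb{Z}^n\}$. $\mathbf{Bad}(m,n)=\{(A,\boldsymbol{\gamma}):\liminf_{\boldsymbol{q}\in\mathbb{Z}^n,\|\boldsymbol{q}\|\to\infty}\|\boldsymbol{q}\|^n\langle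 A\boldsymbol{q}-\boldsymbol{\gamma}\rangle^m>0\}$. *)

From Stdlib Require Import Reals Lra Lia ZArith List.
From Coquelicot Require Import Coquelicot.
Import ListNotations.
Open Scope R_scope.

(* Vectors of Z^n are lists of integers of length n; matrices A in R^{m x n}
   and vectors gamma in R^m are given as functions on indices, only the
   entries i < m, j < n being relevant. *)

Definition normZ (q : list Z) : nat :=
  Z.to_nat (fold_right Z.max 0%Z (map Z.abs q)).

Definition flr (y : R) : Z := (up y - 1)%Z.
Definition distZ (y : R) : R := Rmin (y - IZR (flr y)) (IZR (flr y) + 1 - y).

Definition Aq_g (n : nat) (A : nat -> nat -> R) (g : nat -> R) (q : list Z)
  (i : nat) : R :=
  fold_right Rplus 0 (map (fun j => A i j * IZR (nth j q 0%Z)) (seq 0 n)) - g i.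

Definition distZv (m : nat) (y : nat -> R) : R :=
  fold_right Rmax 0 (map (fun i => distZ (y i)) (seq 0 m)).

(* Functions psi : N = {1,2,...} -> [0,oo) are encoded as psi : nat -> R with
   psi 0 = 0 (the value at 0 is a dummy normalisation). *)
Definition Cset (m n : nat) (psi : nat -> R) : Prop :=
  psi 0%nat = 0 /\
  (forall q, (1 <= q)%nat -> 0 <= psi q) /\
  (forall p q, (1 <= p)%nat -> (p <= q)%nat -> psi q <= psi p) /\
  ex_series (fun q => INR q ^ (n - 1) * psi q ^ m).

(* the metric d(psi1,psi2) = sum_{q>=1} q^{n-1} |psi1(q)^m - psi2(q)^m|
   (the q = 0 term vanishes on Cset since psi 0 = 0 and m >= 1) *)
Definition dist_C (m n : nat) (psi1 psi2 : nat -> R) : R :=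
  Series (fun q => INR q ^ (n - 1) * Rabs (psi1 q ^ m - psi2 q ^ m)).

Definition CAg (m n : nat) (A : nat -> nat -> R) (g : nat -> R)
  (psi : nat -> R) : Prop :=
  Cset m n psi /\
  (* infinitely many q in Z^n: not contained in any finite list *)
  forall l : list (list Z), exists q : list Z,
    length q = n /\ ~ In q l /\
    distZv m (Aq_g n A g q) < psi (normZ q).

(* Bad(m,n): liminf_{||q|| -> oo} ||q||^n <Aq - gamma>^m > 0 *)
Definition Bad (m n : nat) (A : nat -> nat -> R) (g : nat -> R) : Prop :=
  exists c, 0 < c /\ exists N : nat, forall q : list Z,
    length q = n -> (N <= normZ q)%nat ->
    c <= INR (normZ q) ^ n * distZv m (Aq_g n A g q) ^ m.

Definition open_C (m n : nat) (U : (nat -> R) -> Prop) : Prop :=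
  (forall psi, U psi -> Cset m n psi) /\
  forall psi, U psi -> exists eps, 0 < eps /\
    forall phi, Cset m n phi -> dist_C m n psi phi < eps -> U phi.

Definition closed_C (m n : nat) (F : (nat -> R) -> Prop) : Prop :=
  (forall psi, F psi -> Cset m n psi) /\
  open_C m n (fun psi => Cset m n psi /\ ~ F psi).

Definition G_delta_C (m n : nat) (S : (nat -> R) -> Prop) : Prop :=
  exists U : nat -> (nat -> R) -> Prop,
    (forall k, open_C m n (U k)) /\ forall psi, S psi <-> forall k, U k psi.

Definition F_sigma_C (m n : nat) (S : (nat -> R) -> Prop) : Prop :=
  exists F : nat -> (nat -> R) -> Prop,
    (forall k, closed_C m n (F k)) /\ forall psi, S psi <-> exists k, F k psi.

Definition dense_C (m n : nat) (S : (nat -> R) -> Prop) : Prop :=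
  forall psi, Cset m n psi -> forall eps, 0 < eps ->
    exists phi, S phi /\ dist_C m n psi phi < eps.

(* For each N, the set of psi in C for which some q with ||q|| > N satisfies
   <Aq - gamma> < psi(||q||) is open, because the d-distance controls every single
   value psi(k)^m; C(A,gamma) is the intersection of these sets, hence G_delta.

   Since (A,gamma) is not in Bad, there are q of arbitrarily large norm with
   ||q||^n <Aq - gamma>^m arbitrarily small. Choosing such q_0, q_1, ... one after
   the other gives a decreasing step function theta equal to c_k on the block
   (||q_(k-1)||, ||q_k||], with <A q_k - gamma> < c_k, c_k^m ||q_k||^n <= e_k and
   e_(k+1) <= e_k / 2. Then theta lies in C(A,gamma), while its truncation after
   block k-1 is finitely supported, hence outside C(A,gamma), and at distance at most
   2 e_k from theta. Taking e_0 small, max(psi, theta) is a point of C(A,gamma) close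
   to psi. If C(A,gamma) were the union of closed sets F_k, one could choose each e_k
   so small that the ball of radius 2 e_k around the k-th truncation, which is
   outside F_k, misses F_k; then theta would lie in no F_k. *)

From Stdlib Require Import Reals Lra Lia ZArith List.
From Stdlib Require Import Classical IndefiniteDescription FunctionalExtensionality.
From Coquelicot Require Import Coquelicot.
Import ListNotations.
Open Scope R_scope.
Set Default Proof Using "All".

Lemma sum_n_le_mono (a : nat -> R) (N M : nat) :
  (forall k, 0 <= a k) -> (N <= M)%nat -> sum_n a N <= sum_n a M.
Proof.
  intros Ha. induction 1 as [|M _ IH]; [lra|].
  rewrite sum_Sn. change (plus ?x ?y) with (x + y). specialize (Ha (S M)). lra.
Qed.

Lemma sum_n_le_Series (a : nat -> R) (N : nat) :
  (forall k, 0 <= a k) -> ex_series a -> sum_n a N <= Series a.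
Proof.
  intros Ha [l Hl]. rewrite (is_series_unique a l Hl).
  apply (is_lim_seq_incr_compare (sum_n a)); [exact Hl|].
  intro k. apply sum_n_le_mono; auto.
Qed.

Lemma term_le_Series (a : nat -> R) (k : nat) :
  (forall k, 0 <= a k) -> ex_series a -> a k <= Series a.
Proof.
  intros Ha Hs. eapply Rle_trans; [|exact (sum_n_le_Series a k Ha Hs)].
  destruct k as [|k]; [rewrite sum_O; lra|].
  rewrite sum_Sn. change (plus ?x ?y) with (x + y).
  pose proof (sum_n_le_mono a 0 k Ha (Nat.le_0_l k)) as Hpartial. rewrite sum_O in Hpartial.
  specialize (Ha 0%nat). lra.
Qed.

Lemma ex_series_nonneg_bounded (a : nat -> R) (B : R) :
  (forall k, 0 <= a k) -> (forall N, sum_n a N <= B) -> ex_series a /\ Series a <= B.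
Proof.
  intros Ha HB.
  destruct (ex_finite_lim_seq_incr (sum_n a) B) as [l Hl]; auto.
  { intro N. apply sum_n_le_mono; auto. }
  assert (Hs : is_series a l) by exact Hl.
  split; [exists l; exact Hs|].
  rewrite (is_series_unique a l Hs).
  exact (is_lim_seq_le (sum_n a) (fun _ => B) l B HB Hl (is_lim_seq_const B)).
Qed.

Lemma sum_n_m_le_const (a : nat -> R) (i j : nat) (B : R) :
  (forall k, (i <= k <= j)%nat -> a k <= B) -> sum_n_m a i j <= INR (S j - i) * B.
Proof.
  intros Hle. rewrite <- sum_n_m_const, (sum_n_m_ext_loc a (fun k => Rmin (a k) B)).
  - apply sum_n_m_le. intro k. apply Rmin_r.
  - intros k Hk. rewrite Rmin_left; auto.
Qed.

Definition weighted_pow (m n : nat) (f : nat -> R) (q : nat) : R := INR q ^ (n - 1) * f q ^ m.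

Lemma weighted_pow_nonneg m n (f : nat -> R) q : 0 <= f q -> 0 <= weighted_pow m n f q.
Proof. intros Hq. apply Rmult_le_pos; apply pow_le; [apply pos_INR| exact Hq]. Qed.

Lemma weighted_pow_le m n (f h : nat -> R) q :
  0 <= f q <= h q -> weighted_pow m n f q <= weighted_pow m n h q.
Proof. intros Hq. apply Rmult_le_compat_l; [apply pow_le, pos_INR| apply pow_incr; exact Hq]. Qed.

Lemma ex_series_weighted_pow_le m n (f h : nat -> R) :
  (forall q, 0 <= f q <= h q) -> ex_series (weighted_pow m n h) -> ex_series (weighted_pow m n f).
Proof.
  intros Hfh. apply (ex_series_le (V := R_CompleteNormedModule)). intro q.
  change (norm ?x) with (Rabs x). rewrite Rabs_pos_eq by apply weighted_pow_nonneg, Hfh.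
  apply weighted_pow_le, Hfh.
Qed.

Lemma Cset_nonneg m n (psi : nat -> R) q : Cset m n psi -> 0 <= psi q.
Proof. intros (H0 & Hpos & _). destruct q; [rewrite H0; lra| apply Hpos; lia]. Qed.

Lemma ex_series_dist_C m n (psi phi : nat -> R) :
  Cset m n psi -> Cset m n phi ->
  ex_series (fun q => INR q ^ (n - 1) * Rabs (psi q ^ m - phi q ^ m)).
Proof.
  intros Hpsi Hphi.
  apply (ex_series_le (V := R_CompleteNormedModule))
    with (fun q => weighted_pow m n psi q + weighted_pow m n phi q).
  - intro q. change (norm ?x) with (Rabs x). unfold weighted_pow.
    pose proof (pow_le _ m (Cset_nonneg m n psi q Hpsi)) as Hpsi_m.
    pose proof (pow_le _ m (Cset_nonneg m n phi q Hphi)) as Hphi_m.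
    pose proof (pow_le (INR q) (n - 1) (pos_INR q)) as Hweight.
    assert (Habs : Rabs (psi q ^ m - phi q ^ m) <= psi q ^ m + phi q ^ m) by (apply Rabs_le; lra).
    rewrite Rabs_pos_eq by (apply Rmult_le_pos; [lra| apply Rabs_pos]). nra.
  - apply (ex_series_plus (V := R_NormedModule)); [apply Hpsi| apply Hphi].
Qed.

Lemma pow_diff_le_dist_C m n (psi phi : nat -> R) k :
  Cset m n psi -> Cset m n phi -> (1 <= k)%nat ->
  Rabs (psi k ^ m - phi k ^ m) <= dist_C m n psi phi.
Proof.
  intros Hpsi Hphi Hk.
  assert (Hweight : 1 <= INR k ^ (n - 1)) by (apply pow_R1_Rle, (le_INR 1), Hk).
  pose proof (Rabs_pos (psi k ^ m - phi k ^ m)).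
  eapply Rle_trans;
    [|apply (term_le_Series _ k); [|exact (ex_series_dist_C m n psi phi Hpsi Hphi)]].
  - nra.
  - intro q. apply Rmult_le_pos; [apply pow_le, pos_INR| apply Rabs_pos].
Qed.

Lemma Cset_max m n (psi phi : nat -> R) :
  Cset m n psi -> Cset m n phi -> Cset m n (fun q => Rmax (psi q) (phi q)).
Proof.
  intros Hpsi Hphi.
  pose proof Hpsi as (Hpsi0 & _ & Hpsi_dec & Hpsi_sum).
  pose proof Hphi as (Hphi0 & _ & Hphi_dec & Hphi_sum).
  split; [rewrite Hpsi0, Hphi0; apply Rmax_left; lra|].
  split; [intros q _; eapply Rle_trans; [apply (Cset_nonneg m n psi q Hpsi)| apply Rmax_l]|].
  split.
  - intros p q Hp Hpq. apply Rmax_lub.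
    + apply Rle_trans with (psi p); [apply Hpsi_dec; auto| apply Rmax_l].
    + apply Rle_trans with (phi p); [apply Hphi_dec; auto| apply Rmax_r].
  - apply (ex_series_le (V := R_CompleteNormedModule))
      with (fun q => weighted_pow m n psi q + weighted_pow m n phi q).
    + intro q. change (norm ?x) with (Rabs x).
      pose proof (weighted_pow_nonneg m n psi q (Cset_nonneg m n psi q Hpsi)).
      pose proof (weighted_pow_nonneg m n phi q (Cset_nonneg m n phi q Hphi)).
      unfold Rmax. destruct (Rle_dec (psi q) (phi q)).
      * rewrite Rabs_pos_eq; fold (weighted_pow m n phi q); lra.
      * rewrite Rabs_pos_eq; fold (weighted_pow m n psi q); lra.
    + apply (ex_series_plus (V := R_NormedModule)); [exact Hpsi_sum| exact Hphi_sum].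
Qed.

Lemma dist_C_max_le m n (psi phi : nat -> R) :
  Cset m n psi -> Cset m n phi ->
  dist_C m n psi (fun q => Rmax (psi q) (phi q)) <= Series (weighted_pow m n phi).
Proof.
  intros Hpsi Hphi. apply Series_le; [|apply Hphi]. intro q.
  pose proof (Cset_nonneg m n psi q Hpsi) as Hpsi_q.
  pose proof (Cset_nonneg m n phi q Hphi) as Hphi_q.
  split; [apply Rmult_le_pos; [apply pow_le, pos_INR| apply Rabs_pos]|].
  unfold Rmax. destruct (Rle_dec (psi q) (phi q)) as [Hle|Hlt].
  - rewrite Rabs_left1 by (pose proof (pow_incr _ _ m (conj Hpsi_q Hle)); lra).
    apply Rmult_le_compat_l; [apply pow_le, pos_INR|]. pose proof (pow_le _ m Hpsi_q). lra.
  - rewrite Rminus_diag, Rabs_R0, Rmult_0_r. exact (weighted_pow_nonneg m n phi q Hphi_q).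
Qed.

Definition rangeZ (N : nat) : list Z :=
  map (fun i => (Z.of_nat i - Z.of_nat N)%Z) (seq 0 (2 * N + 1)).

Fixpoint ball_vectors (n N : nat) : list (list Z) :=
  match n with
  | O => [[]]
  | S n' => flat_map (fun z => map (cons z) (ball_vectors n' N)) (rangeZ N)
  end.

Lemma In_rangeZ z N : (Z.abs z <= Z.of_nat N)%Z -> In z (rangeZ N).
Proof.
  intros Hz. apply in_map_iff. exists (Z.to_nat (z + Z.of_nat N)). split.
  - rewrite Z2Nat.id; lia.
  - apply in_seq. lia.
Qed.

Lemma abs_le_normZ q z : In z q -> (Z.abs z <= Z.of_nat (normZ q))%Z.
Proof.
  intros Hz. unfold normZ.
  assert (Hmax : forall l, (0 <= fold_right Z.max 0 l)%Z) by (induction l; simpl; lia).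
  rewrite Z2Nat.id by apply Hmax.
  induction q as [|w q IH]; simpl in *; [contradiction|].
  destruct Hz as [->|Hz]; [lia|]. specialize (IH Hz). lia.
Qed.

Lemma In_ball_vectors n N q : length q = n -> (normZ q <= N)%nat -> In q (ball_vectors n N).
Proof.
  intros Hlen HN.
  assert (Hz : forall z, In z q -> (Z.abs z <= Z.of_nat N)%Z)
    by (intros z Hz; pose proof (abs_le_normZ q z Hz); lia).
  clear HN. revert q Hlen Hz. induction n as [|n IH]; intros q Hlen Hz.
  - destruct q; [left; reflexivity| discriminate].
  - destruct q as [|z q]; [discriminate|]. simpl. apply in_flat_map. exists z. split.
    + apply In_rangeZ, Hz. left; reflexivity.
    + apply in_map, IH; [simpl in Hlen; lia|]. intros w Hw. apply Hz. right; exact Hw.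
Qed.

Lemma normZ_bounded_on_list (l : list (list Z)) : exists B, forall q, In q l -> (normZ q <= B)%nat.
Proof.
  induction l as [|a l [B HB]]; [exists 0%nat; intros q []|].
  exists (Nat.max (normZ a) B). intros q [->|Hq]; [lia|]. specialize (HB q Hq). lia.
Qed.

Lemma infinitely_many_iff_unbounded n (P : list Z -> Prop) :
  (forall l : list (list Z), exists q, length q = n /\ ~ In q l /\ P q) <->
  (forall N, exists q, length q = n /\ (N < normZ q)%nat /\ P q).
Proof.
  split.
  - intros Hinf N. destruct (Hinf (ball_vectors n N)) as (q & Hlen & Hnin & HP).
    exists q. repeat split; auto.
    destruct (Nat.le_gt_cases (normZ q) N); [|lia].
    exfalso. apply Hnin, In_ball_vectors; auto.
  - intros Hunb l. destruct (normZ_bounded_on_list l) as [B HB].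
    destruct (Hunb B) as (q & Hlen & HBq & HP). exists q. repeat split; auto.
    intros Hin. specialize (HB q Hin). lia.
Qed.

Lemma distZv_nonneg m y : 0 <= distZv m y.
Proof.
  unfold distZv. induction (seq 0 m) as [|i l IH]; simpl; [lra|].
  eapply Rle_trans; [exact IH| apply Rmax_r].
Qed.

Definition hits_beyond m n A g (N : nat) (psi : nat -> R) : Prop :=
  Cset m n psi /\
  exists q, length q = n /\ (N < normZ q)%nat /\ distZv m (Aq_g n A g q) < psi (normZ q).

Lemma CAg_iff_hits_beyond m n A g psi :
  CAg m n A g psi <-> forall N, hits_beyond m n A g N psi.
Proof.
  pose proof (infinitely_many_iff_unbounded n
    (fun q => distZv m (Aq_g n A g q) < psi (normZ q))) as Hiff.
  unfold CAg, hits_beyond. split.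
  - intros [HC Hinf] N. split; [exact HC|]. apply Hiff, Hinf.
  - intros Hhits. split; [apply (Hhits 0%nat)|]. apply Hiff. intro N. apply Hhits.
Qed.

Lemma hits_beyond_open m n A g N : (1 <= m)%nat -> open_C m n (hits_beyond m n A g N).
Proof.
  intros Hm. split; [intros psi [HC _]; exact HC|].
  intros psi [HC (q & Hlen & HN & Hq)].
  set (k := normZ q) in *. set (d := distZv m (Aq_g n A g q)) in *.
  assert (Hd : 0 <= d) by apply distZv_nonneg.
  assert (Hgap : d ^ m < psi k ^ m).
  { destruct m as [|m']; [lia|]. simpl.
    pose proof (pow_incr d (psi k) m' (conj Hd (Rlt_le _ _ Hq))).
    pose proof (pow_lt (psi k) m' ltac:(lra)). nra. }
  exists (psi k ^ m - d ^ m). split; [lra|].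
  intros phi Hphi Hdist. split; [exact Hphi|]. exists q. repeat split; auto. fold k d.
  pose proof (pow_diff_le_dist_C m n psi phi k HC Hphi ltac:(lia)).
  pose proof (Rle_abs (psi k ^ m - phi k ^ m)).
  destruct (Rlt_or_le d (phi k)) as [Hlt|Hle]; [exact Hlt|].
  pose proof (pow_incr (phi k) d m (conj (Cset_nonneg m n phi k Hphi) Hle)). lra.
Qed.

Lemma CAg_G_delta m n A g : (1 <= m)%nat -> G_delta_C m n (CAg m n A g).
Proof.
  intros Hm. exists (hits_beyond m n A g). split.
  - intro N. exact (hits_beyond_open m n A g N Hm).
  - intro psi. apply CAg_iff_hits_beyond.
Qed.

Lemma CAg_mono m n A g (psi phi : nat -> R) :
  Cset m n phi -> (forall q, psi q <= phi q) -> CAg m n A g psi -> CAg m n A g phi.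
Proof.
  intros Hphi Hle [_ Hinf]. split; [exact Hphi|]. intro l.
  destruct (Hinf l) as (q & Hlen & Hnin & Hq). exists q. repeat split; auto.
  eapply Rlt_le_trans; [exact Hq| apply Hle].
Qed.

Lemma not_CAg_eventually_zero m n A g (psi : nat -> R) N :
  (forall q, (N < q)%nat -> psi q = 0) -> ~ CAg m n A g psi.
Proof.
  intros Hzero HC.
  destruct (proj1 (CAg_iff_hits_beyond m n A g psi) HC N) as [_ (q & _ & HN & Hq)].
  rewrite (Hzero _ HN) in Hq. pose proof (distZv_nonneg m (Aq_g n A g q)). lra.
Qed.

Definition hit_at m n A g (N : nat) (c0 : R) : Prop :=
  exists q, length q = n /\ normZ q = N /\ distZv m (Aq_g n A g q) < c0.

Fixpoint block_index (r : nat -> nat) (q : nat) : nat :=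
  match q with
  | O => O
  | S q' => if Nat.ltb (r (block_index r q')) (S q') then S (block_index r q') else block_index r q'
  end.

Definition step_fun (r : nat -> nat) (c : nat -> R) (q : nat) : R :=
  match q with O => 0 | S _ => c (block_index r q) end.

Definition prev_end (r : nat -> nat) (k : nat) : nat :=
  match k with O => O | S k' => r k' end.

Definition step_trunc (r : nat -> nat) (c : nat -> R) (k q : nat) : R :=
  if Nat.leb q (prev_end r k) then step_fun r c q else 0.

Definition tail (f : nat -> R) (N q : nat) : R := if Nat.leb q N then 0 else f q.

Lemma block_index_mono r q q' : (q <= q')%nat -> (block_index r q <= block_index r q')%nat.
Proof. induction 1 as [|q' _ IH]; [lia|]. simpl. destruct (Nat.ltb _ _); lia. Qed.

Lemma step_trunc_not_CAg m n A g r c k : ~ CAg m n A g (step_trunc r c k).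
Proof.
  apply (not_CAg_eventually_zero m n A g _ (prev_end r k)). intros q Hq.
  unfold step_trunc. destruct (Nat.leb_spec q (prev_end r k)); [lia| reflexivity].
Qed.

(* step_fun r c equals c k on the block (prev_end r k, r k]; adm_block_mass bounds
   the weighted mass of block k by e k. *)
Set Implicit Arguments.
Record admissible (m n : nat) (r : nat -> nat) (c e : nat -> R) : Prop := {
  adm_r_incr : forall j, (r j < r (S j))%nat;
  adm_r_pos : (0 < r 0)%nat;
  adm_c_pos : forall j, 0 < c j;
  adm_c_decr : forall j, c (S j) <= c j;
  adm_e_halving : forall j, 2 * e (S j) <= e j;
  adm_block_mass : forall j, c j ^ m * INR (r j) ^ n <= e j }.
Unset Implicit Arguments.

Section StepFunctions.
Context {m n : nat} {r : nat -> nat} {c e : nat -> R}.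
Hypothesis Hadm : admissible m n r c e.

Lemma r_le i j : (i <= j)%nat -> (r i <= r j)%nat.
Proof. induction 1 as [|j _ IH]; [lia|]. pose proof (adm_r_incr Hadm j). lia. Qed.

Lemma r_gt k : (k < r k)%nat.
Proof. induction k as [|k IH]; [exact (adm_r_pos Hadm)|]. pose proof (adm_r_incr Hadm k). lia. Qed.

Lemma prev_end_lt k : (prev_end r k < r k)%nat.
Proof. destruct k; simpl; [exact (adm_r_pos Hadm)| apply (adm_r_incr Hadm)]. Qed.

Lemma c_anti i j : (i <= j)%nat -> c j <= c i.
Proof. induction 1 as [|j _ IH]; [lra|]. pose proof (adm_c_decr Hadm j). lra. Qed.

Lemma e_nonneg j : 0 <= e j.
Proof.
  eapply Rle_trans; [|exact (adm_block_mass Hadm j)].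
  apply Rmult_le_pos; apply pow_le; [apply Rlt_le, (adm_c_pos Hadm)| apply pos_INR].
Qed.

Lemma block_index_spec q :
  (q <= r (block_index r q))%nat /\ forall j, (j < block_index r q)%nat -> (r j < q)%nat.
Proof.
  induction q as [|q [IH1 IH2]]; simpl; [split; intros; lia|].
  destruct (Nat.ltb_spec (r (block_index r q)) (S q)) as [Hlt|Hge].
  - pose proof (adm_r_incr Hadm (block_index r q)). split; [lia|].
    intros j Hj. destruct (Nat.eq_dec j (block_index r q)) as [->|Hne]; [lia|].
    specialize (IH2 j ltac:(lia)). lia.
  - split; [lia|]. intros j Hj. specialize (IH2 j Hj). lia.
Qed.

Lemma step_fun_on_block k q : (prev_end r k < q <= r k)%nat -> step_fun r c q = c k.
Proof.
  intros [Hlo Hhi]. destruct q as [|q]; [lia|]. unfold step_fun. f_equal.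
  destruct (block_index_spec (S q)) as [Hs1 Hs2].
  destruct (Nat.lt_trichotomy (block_index r (S q)) k) as [Hlt|[Heq|Hgt]]; auto.
  - destruct k as [|k]; [lia|]. simpl in Hlo.
    pose proof (r_le (block_index r (S q)) k ltac:(lia)). lia.
  - specialize (Hs2 k Hgt). lia.
Qed.

Lemma step_fun_at_end k : step_fun r c (r k) = c k.
Proof. apply step_fun_on_block. pose proof (prev_end_lt k). lia. Qed.

Lemma step_fun_nonneg q : 0 <= step_fun r c q.
Proof. destruct q; simpl; [lra| apply Rlt_le, (adm_c_pos Hadm)]. Qed.

Lemma step_fun_decr p q : (1 <= p)%nat -> (p <= q)%nat -> step_fun r c q <= step_fun r c p.
Proof.
  intros Hp Hpq. destruct p as [|p]; [lia|]. destruct q as [|q]; [lia|].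
  apply c_anti, block_index_mono. exact Hpq.
Qed.

Section Mass.
Hypothesis Hm : (1 <= m)%nat.
Hypothesis Hn : (1 <= n)%nat.

Lemma block_sum_le j :
  sum_n_m (weighted_pow m n (step_fun r c)) (S (prev_end r j)) (r j) <= e j.
Proof.
  eapply Rle_trans.
  - apply (sum_n_m_le_const _ _ _ (INR (r j) ^ (n - 1) * c j ^ m)).
    intros q Hq. unfold weighted_pow. rewrite (step_fun_on_block j q) by lia.
    apply Rmult_le_compat_r; [apply pow_le, Rlt_le, (adm_c_pos Hadm)|].
    apply pow_incr. split; [apply pos_INR| apply le_INR; lia].
  - pose proof (adm_block_mass Hadm j).
    assert (Hlen : INR (S (r j) - S (prev_end r j)) <= INR (r j)) by (apply le_INR; lia).
    assert (Hpow : INR (r j) * INR (r j) ^ (n - 1) = INR (r j) ^ n).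
    { replace n with (S (n - 1)) at 2 by lia. reflexivity. }
    pose proof (pow_le (INR (r j)) (n - 1) (pos_INR _)).
    pose proof (pow_le (c j) m (Rlt_le _ _ (adm_c_pos Hadm j))).
    apply Rmult_le_compat_r with (r := INR (r j) ^ (n - 1) * c j ^ m) in Hlen;
      [nra| apply Rmult_le_pos; assumption].
Qed.

Lemma blocks_sum_le k K : (k <= K)%nat ->
  sum_n_m (weighted_pow m n (step_fun r c)) (S (prev_end r k)) (r K) <= 2 * e k - e K.
Proof.
  induction 1 as [|K HkK IH]; [pose proof (block_sum_le k); lra|].
  rewrite (sum_n_m_Chasles _ _ (r K)).
  - change (plus ?x ?y) with (x + y).
    pose proof (block_sum_le (S K)). pose proof (adm_e_halving Hadm K). simpl in *. lra.
  - pose proof (prev_end_lt k). pose proof (r_le k K HkK). lia.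
  - pose proof (adm_r_incr Hadm K). lia.
Qed.

Lemma tail_weighted_nonneg N q : 0 <= tail (weighted_pow m n (step_fun r c)) N q.
Proof.
  unfold tail. destruct (Nat.leb q N); [lra|].
  apply weighted_pow_nonneg, step_fun_nonneg.
Qed.

Lemma tail_series k :
  let t := tail (weighted_pow m n (step_fun r c)) (prev_end r k) in
  ex_series t /\ Series t <= 2 * e k.
Proof.
  intro t. apply ex_series_nonneg_bounded; [apply tail_weighted_nonneg|]. intro N.
  set (K := Nat.max N k).
  assert (HN : (N <= r K)%nat) by (pose proof (r_gt K); lia).
  eapply Rle_trans; [apply (sum_n_le_mono _ _ _ (tail_weighted_nonneg _) HN)|].
  unfold sum_n. rewrite (sum_n_m_Chasles _ _ (prev_end r k))
    by (pose proof (prev_end_lt k); pose proof (r_le k K ltac:(lia)); lia).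
  change (plus ?x ?y) with (x + y).
  rewrite (sum_n_m_ext_loc t (fun _ => zero)), sum_n_m_const_zero
    by (intros q Hq; unfold t, tail; destruct (Nat.leb_spec q (prev_end r k)); [reflexivity| lia]).
  rewrite (sum_n_m_ext_loc t (weighted_pow m n (step_fun r c)))
    by (intros q Hq; unfold t, tail; destruct (Nat.leb_spec q (prev_end r k)); [lia| reflexivity]).
  pose proof (blocks_sum_le k K ltac:(lia)). pose proof (e_nonneg K).
  change (@zero R_AbelianMonoid) with 0. lra.
Qed.

Lemma tail_prev_end_0 :
  tail (weighted_pow m n (step_fun r c)) (prev_end r 0) = weighted_pow m n (step_fun r c).
Proof.
  apply functional_extensionality. intro q. unfold tail, prev_end.
  destruct (Nat.leb_spec q 0); [|reflexivity].
  replace q with 0%nat by lia. unfold weighted_pow. simpl. rewrite (pow_i m) by lia. ring.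
Qed.

Lemma Cset_step_fun : Cset m n (step_fun r c).
Proof.
  split; [reflexivity|]. split; [intros; apply step_fun_nonneg|]. split; [exact step_fun_decr|].
  destruct (tail_series 0) as [Hs _]. rewrite tail_prev_end_0 in Hs. exact Hs.
Qed.

Lemma Series_weighted_step_fun_le : Series (weighted_pow m n (step_fun r c)) <= 2 * e 0.
Proof. destruct (tail_series 0) as [_ Hs]. rewrite tail_prev_end_0 in Hs. exact Hs. Qed.

Lemma step_trunc_le k q : 0 <= step_trunc r c k q <= step_fun r c q.
Proof.
  unfold step_trunc. pose proof (step_fun_nonneg q). destruct (Nat.leb q (prev_end r k)); lra.
Qed.

Lemma Cset_step_trunc k : Cset m n (step_trunc r c k).
Proof.
  split; [reflexivity|]. split; [intros; apply step_trunc_le|]. split.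
  - intros p q Hp Hpq. unfold step_trunc.
    destruct (Nat.leb_spec q (prev_end r k)), (Nat.leb_spec p (prev_end r k)); try lia.
    + apply step_fun_decr; auto.
    + apply step_fun_nonneg.
    + lra.
  - apply (ex_series_weighted_pow_le m n _ (step_fun r c)); [exact (step_trunc_le k)|].
    apply Cset_step_fun.
Qed.

Lemma dist_step_trunc_le k : dist_C m n (step_trunc r c k) (step_fun r c) <= 2 * e k.
Proof.
  destruct (tail_series k) as [_ Hs]. eapply Rle_trans; [|exact Hs].
  right. apply Series_ext. intro q. unfold step_trunc, tail, weighted_pow.
  destruct (Nat.leb q (prev_end r k)).
  - rewrite Rminus_diag, Rabs_R0. ring.
  - rewrite pow_i, Rminus_0_l, Rabs_Ropp, Rabs_pos_eq by (lia || apply pow_le, step_fun_nonneg).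
    reflexivity.
Qed.

Lemma CAg_step_fun A g : (forall k, hit_at m n A g (r k) (c k)) -> CAg m n A g (step_fun r c).
Proof.
  intros Hhit. apply CAg_iff_hits_beyond. intro N. split; [exact Cset_step_fun|].
  destruct (Hhit N) as (q & Hlen & Hnorm & Hq). exists q. rewrite Hnorm, step_fun_at_end.
  repeat split; auto. apply r_gt.
Qed.

End Mass.
End StepFunctions.

Lemma not_Bad_small_products m n A g : ~ Bad m n A g -> forall b N, 0 < b ->
  exists q, length q = n /\ (N <= normZ q)%nat /\
    INR (normZ q) ^ n * distZv m (Aq_g n A g q) ^ m < b.
Proof.
  intros HnB b N Hb. apply NNPP. intros Hnone. apply HnB. exists b. split; [exact Hb|].
  exists N. intros q Hlen HN. apply Rnot_lt_le. intros Hlt. apply Hnone. exists q. auto.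
Qed.

Definition next_block_ok m n (good : nat -> R -> Prop) (N : nat) (c0 e0 : R) (p : nat * R) : Prop :=
  (N < fst p)%nat /\ 0 < snd p <= c0 /\ snd p ^ m * INR (fst p) ^ n <= e0 /\ good (fst p) (snd p).

Lemma exists_spike m n A g N c0 e0 : ~ Bad m n A g -> 0 < c0 -> 0 < e0 ->
  exists p, next_block_ok m n (hit_at m n A g) N c0 e0 p.
Proof.
  intros HnB Hc He.
  destruct (not_Bad_small_products m n A g HnB (Rmin e0 (c0 ^ m)) (S N))
    as (q & Hlen & HN & Hsmall).
  { apply Rmin_glb_lt; [lra| apply pow_lt; lra]. }
  set (x := INR (normZ q) ^ n) in *. set (d := distZv m (Aq_g n A g q)) in *.
  assert (Hx : 1 <= x) by (apply pow_R1_Rle, (le_INR 1); lia).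
  assert (Hd : 0 <= d) by apply distZv_nonneg.
  assert (Hdm : 0 <= d ^ m) by (apply pow_le; lra).
  pose proof (Rmin_l e0 (c0 ^ m)). pose proof (Rmin_r e0 (c0 ^ m)).
  assert (Hdc : d < c0).
  { destruct (Rlt_or_le d c0) as [Hlt|Hle]; [exact Hlt|].
    pose proof (pow_incr c0 d m (conj (Rlt_le _ _ Hc) Hle)). nra. }
  assert (Hgap : 0 < e0 - d ^ m * x) by nra.
  (* By continuity, t ^ m * x stays below e0 for t slightly larger than d. *)
  assert (Hcont : continuity_pt (fun t => t ^ m * x) d).
  { apply continuity_pt_filterlim, (ex_derive_continuous (fun t => t ^ m * x)).
    auto_derive. trivial. }
  destruct (proj1 (continuity_pt_locally _ d) Hcont (mkposreal _ Hgap)) as [delta Hdelta].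
  set (c' := Rmin c0 (d + delta / 2)).
  assert (Hc' : d < c' <= c0).
  { pose proof (cond_pos delta). unfold c'. split; [apply Rmin_glb_lt; lra| apply Rmin_l]. }
  assert (Hclose : Rabs (c' ^ m * x - d ^ m * x) < e0 - d ^ m * x).
  { apply Hdelta. change (Rabs (c' - d) < delta). pose proof (cond_pos delta).
    rewrite Rabs_pos_eq by lra. unfold c'. pose proof (Rmin_r c0 (d + delta / 2)). lra. }
  exists (normZ q, c'). unfold next_block_ok. simpl. fold x.
  pose proof (Rle_abs (c' ^ m * x - d ^ m * x)).
  split; [lia|]. split; [lra|]. split; [lra|].
  exists q. repeat split; auto. fold d. lra.
Qed.

Section AdaptedConstruction.
Variables (m n : nat) (good : nat -> R -> Prop) (next : nat -> R -> R -> nat * R).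
Hypothesis next_ok : forall N c0 e0, 0 < c0 -> 0 < e0 ->
  next_block_ok m n good N c0 e0 (next N c0 e0).
Variable rho : (nat -> R) -> nat -> R.
Hypothesis rho_pos : forall f k, 0 < rho f k.

(* A stage carries the step function built so far (the truncation step_trunc r c k of
   the final one, by stage_fun_at), so that the next mass can depend on it through rho. *)
Record stage := Stage { stage_fun : nat -> R; stage_end : nat; stage_height : R; stage_mass : R }.

Definition next_mass (s : stage) (k : nat) : R := Rmin (stage_mass s / 2) (rho (stage_fun s) k / 4).

Definition next_stage (s : stage) (k : nat) : stage :=
  let p := next (stage_end s) (stage_height s) (next_mass s k) in
  Stage (fun q => if Nat.leb q (stage_end s) then stage_fun s q
                  else if Nat.leb q (fst p) then snd p else 0)
        (fst p) (snd p) (next_mass s k).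

Fixpoint stage_at (k : nat) : stage :=
  match k with O => Stage (fun _ => 0) 0 1 1 | S k' => next_stage (stage_at k') k' end.

Definition built_end (k : nat) : nat := stage_end (stage_at (S k)).
Definition built_height (k : nat) : R := stage_height (stage_at (S k)).
Definition built_mass (k : nat) : R := stage_mass (stage_at (S k)).

Lemma next_mass_pos s k : 0 < stage_mass s -> 0 < next_mass s k.
Proof. intros Hs. pose proof (rho_pos (stage_fun s) k). apply Rmin_glb_lt; lra. Qed.

Lemma stage_at_ok k :
  0 < stage_height (stage_at k) /\ 0 < stage_mass (stage_at k) /\
  next_block_ok m n good (stage_end (stage_at k)) (stage_height (stage_at k))
    (next_mass (stage_at k) k)
    (next (stage_end (stage_at k)) (stage_height (stage_at k)) (next_mass (stage_at k) k)).
Proof.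
  induction k as [|k (Hheight & Hmass & Hok)].
  - simpl. split; [lra|]. split; [lra|].
    apply next_ok; [lra| apply next_mass_pos; simpl; lra].
  - assert (Hpos : 0 < stage_height (stage_at (S k)) /\ 0 < stage_mass (stage_at (S k))).
    { split; [apply Hok| apply next_mass_pos, Hmass]. }
    split; [apply Hpos|]. split; [apply Hpos|].
    apply next_ok; [apply Hpos| apply next_mass_pos, Hpos].
Qed.

Lemma built_admissible : admissible m n built_end built_height built_mass.
Proof.
  constructor.
  - intro j. destruct (stage_at_ok (S j)) as (_ & _ & Hgt & _). exact Hgt.
  - destruct (stage_at_ok 0) as (_ & _ & Hgt & _). exact Hgt.
  - intro j. destruct (stage_at_ok (S j)) as (Hpos & _). exact Hpos.
  - intro j. destruct (stage_at_ok (S j)) as (_ & _ & _ & [_ Hle] & _). exact Hle.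
  - intro j. change (2 * next_mass (stage_at (S j)) (S j) <= stage_mass (stage_at (S j))).
    unfold next_mass. pose proof (Rmin_l (stage_mass (stage_at (S j)) / 2)
      (rho (stage_fun (stage_at (S j))) (S j) / 4)). lra.
  - intro j. destruct (stage_at_ok j) as (_ & _ & _ & _ & Hmass & _). exact Hmass.
Qed.

Lemma stage_fun_at k : stage_fun (stage_at k) = step_trunc built_end built_height k.
Proof.
  apply functional_extensionality. induction k as [|k IH]; intro q.
  - unfold step_trunc. simpl. destruct q; reflexivity.
  - change (stage_fun (stage_at (S k)) q) with
      (if Nat.leb q (stage_end (stage_at k)) then stage_fun (stage_at k) q
       else if Nat.leb q (built_end k) then built_height k else 0).
    replace (stage_end (stage_at k)) with (prev_end built_end k) by (destruct k; reflexivity).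
    rewrite IH. unfold step_trunc. change (prev_end built_end (S k)) with (built_end k).
    pose proof (prev_end_lt built_admissible k).
    destruct (Nat.leb_spec q (prev_end built_end k)), (Nat.leb_spec q (built_end k));
      try lia; try reflexivity.
    symmetry. apply (step_fun_on_block built_admissible k). lia.
Qed.

Lemma exists_adapted_admissible : exists r c e,
  admissible m n r c e /\ (forall k, e k <= rho (step_trunc r c k) k / 4) /\
  (forall k, good (r k) (c k)).
Proof.
  exists built_end, built_height, built_mass. split; [exact built_admissible|]. split.
  - intro k. rewrite <- stage_fun_at. apply Rmin_r.
  - intro k. destruct (stage_at_ok k) as (_ & _ & _ & _ & _ & Hgood). exact Hgood.
Qed.

End AdaptedConstruction.

Lemma exists_adapted_spikes m n A g (rho : (nat -> R) -> nat -> R) :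
  ~ Bad m n A g -> (forall f k, 0 < rho f k) -> exists r c e,
  admissible m n r c e /\ (forall k, e k <= rho (step_trunc r c k) k / 4) /\
  (forall k, hit_at m n A g (r k) (c k)).
Proof.
  intros HnB Hrho.
  assert (Hspike : forall x : nat * R * R, exists p, let '(N, c0, e0) := x in
    0 < c0 -> 0 < e0 -> next_block_ok m n (hit_at m n A g) N c0 e0 p).
  { intros [[N c0] e0].
    destruct (Rlt_dec 0 c0) as [Hc|Hc]; [destruct (Rlt_dec 0 e0) as [He|He]|].
    - destruct (exists_spike m n A g N c0 e0 HnB Hc He) as [p Hp]. exists p. auto.
    - exists (0%nat, 0). intros _ He'. contradiction.
    - exists (0%nat, 0). intros Hc'. contradiction. }
  destruct (functional_choice _ Hspike) as [next Hnext].
  apply (exists_adapted_admissible m n _ (fun N c0 e0 => next (N, c0, e0))); [|exact Hrho].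
  intros N c0 e0. exact (Hnext (N, c0, e0)).
Qed.

Lemma CAg_dense m n A g :
  (1 <= m)%nat -> (1 <= n)%nat -> ~ Bad m n A g -> dense_C m n (CAg m n A g).
Proof.
  intros Hm Hn HnB psi Hpsi eps Heps.
  destruct (exists_adapted_spikes m n A g (fun _ _ => eps) HnB (fun _ _ => Heps))
    as (r & c & e & Hadm & He & Hhit).
  pose proof (Cset_step_fun Hadm Hm Hn) as Htheta.
  exists (fun q => Rmax (psi q) (step_fun r c q)). split.
  - apply (CAg_mono m n A g (step_fun r c)).
    + apply Cset_max; assumption.
    + intro q. apply Rmax_r.
    + exact (CAg_step_fun Hadm Hm Hn A g Hhit).
  - eapply Rle_lt_trans; [apply dist_C_max_le; assumption|].
    pose proof (Series_weighted_step_fun_le Hadm Hm Hn). specialize (He 0%nat). lra.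
Qed.

Lemma closed_family_radii m n (F : nat -> (nat -> R) -> Prop) :
  (forall k, closed_C m n (F k)) ->
  exists rho : (nat -> R) -> nat -> R, (forall f k, 0 < rho f k) /\
    forall f k phi, Cset m n f -> ~ F k f -> Cset m n phi ->
      dist_C m n f phi < rho f k -> ~ F k phi.
Proof.
  intros HF.
  assert (Hradius : forall x : (nat -> R) * nat, exists eps, 0 < eps /\
    (Cset m n (fst x) -> ~ F (snd x) (fst x) ->
     forall phi, Cset m n phi -> dist_C m n (fst x) phi < eps -> ~ F (snd x) phi)).
  { intros [f k]. simpl. destruct (classic (Cset m n f /\ ~ F k f)) as [Hout|Hin].
    - destruct (HF k) as [_ [_ Hopen]]. destruct (Hopen f Hout) as (eps & Heps & Hball).
      exists eps. split; [exact Heps|]. intros _ _ phi Hphi Hd. exact (proj2 (Hball phi Hphi Hd)).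
    - exists 1. split; [lra|]. intros Hf HFf. exfalso. apply Hin. auto. }
  destruct (functional_choice _ Hradius) as [rho Hrho].
  exists (fun f k => rho (f, k)). split.
  - intros f k. exact (proj1 (Hrho (f, k))).
  - intros f k phi Hf HFf. exact (proj2 (Hrho (f, k)) Hf HFf phi).
Qed.

Lemma CAg_not_F_sigma m n A g :
  (1 <= m)%nat -> (1 <= n)%nat -> ~ Bad m n A g -> ~ F_sigma_C m n (CAg m n A g).
Proof.
  intros Hm Hn HnB [F [HF HFeq]].
  destruct (closed_family_radii m n F HF) as (rho & Hrho & Hball).
  destruct (exists_adapted_spikes m n A g rho HnB Hrho) as (r & c & e & Hadm & He & Hhit).
  destruct (proj1 (HFeq _) (CAg_step_fun Hadm Hm Hn A g Hhit)) as [k Hk].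
  apply (Hball (step_trunc r c k) k (step_fun r c));
    [| |exact (Cset_step_fun Hadm Hm Hn)| |exact Hk].
  - exact (Cset_step_trunc Hadm Hm Hn k).
  - intros HFk. apply (step_trunc_not_CAg m n A g r c k), HFeq. exists k. exact HFk.
  - pose proof (dist_step_trunc_le Hadm Hm Hn k). specialize (He k).
    specialize (Hrho (step_trunc r c k) k). lra.
Qed.

Theorem theorem1p7 (m n : nat) (A : nat -> nat -> R) (g : nat -> R) :
  (1 <= m)%nat -> (1 <= n)%nat ->
  (forall i j, (i < m)%nat -> (j < n)%nat -> 0 <= A i j < 1) ->
  (forall i, (i < m)%nat -> 0 <= g i < 1) ->
  ~ Bad m n A g ->
  (G_delta_C m n (CAg m n A g) /\ dense_C m n (CAg m n A g)) /\
  ~ F_sigma_C m n (CAg m n A g).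
Proof.
  (* That the entries of A and gamma lie in [0,1) plays no role. *)
  intros Hm Hn _ _ HnB.
  split; [split|].
  - exact (CAg_G_delta m n A g Hm).
  - exact (CAg_dense m n A g Hm Hn HnB).
  - exact (CAg_not_F_sigma m n A g Hm Hn HnB).
Qed.
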